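(* The allocation rule of the Uniform Price Auction is monotone: for every agent $i$, every profile of the other agents' values $v_{-i}$, and fixed budgets, the map $v_i\mapsto x_i(v_i,v_{-i})$ is non-decreasing.
   Context: Uniform Price Auction: one unit of a divisible good, $n$ agents with values per unit $v_i>0$ and publicly known budgets $B_i>0$. Relabel agents so that $v_1\ge\dots\ge v_n$ and set $v_{n+1}=0$. Let $k\in\{0,\dots,n\}$ be the largest integer with $\sum_{j=1}^kB_j\le v_k$ (the empty sum is $0$, and $k=0$ is always admissible). Case I: if $\sum_{j=1}^kB_j>v_{k+1}$, allocate $x_i=B_i/\sum_{j=1}^kB_j$ for $i\le k$ and $0$ to everyone else. Case II: if $\sum_{j=1}^kB_j\le v_{k+1}$, allocate $x_i=B_i/v_{k+1}$ for $i\le k$, $x_{k+1}=1-\sum_{j=1}^kx_j$, and $0$ to everyone else. Payments are given by Myerson's formula $\pi_i(v)=v_ix_i(v)-\int_0^{v_i}x_i(u,v_{-i})\,du$. *)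

From mathcomp Require Import all_boot all_order all_algebra.
Set Implicit Arguments. Unset Strict Implicit. Unset Printing Implicit Defensive.
Import Order.TTheory GRing.Theory Num.Theory.
Local Open Scope ring_scope.

Section UPA.
Variables (R : realFieldType) (n : nat).
Variables (B v : 'I_n -> R).

Definition upa_before (i j : 'I_n) : bool :=
  (v j < v i) || ((v i == v j) && (i <= j)%N).

Definition upa_order : seq 'I_n := sort upa_before (enum 'I_n).

(* 0-based: upa_val k = v_{k+1} of the paper; upa_val n = v_{n+1} = 0. *)
Definition upa_val (k : nat) : R := nth 0 (map v upa_order) k.
Definition upa_bud (k : nat) : R := nth 0 (map B upa_order) k.

(* sum_{j=1}^k B_j (paper indexing) *)
Definition upa_S (k : nat) : R := \sum_(j < k) upa_bud j.

(* k admissible: sum_{j=1}^k B_j <= v_k (k = 0 always admissible) *)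
Definition upa_adm (k : nat) : bool := (k == 0)%N || (upa_S k <= upa_val k.-1).

Definition upa_k : nat := (\max_(k < n.+1 | upa_adm k) (k : nat))%N.

Definition upa_alloc (i : 'I_n) : R :=
  let k := upa_k in
  let p := index i upa_order in
  if upa_val k < upa_S k then
    (if (p < k)%N then B i / upa_S k else 0)
  else
    (if (p < k)%N then B i / upa_val k
     else if p == k then 1 - \sum_(j < k) (upa_bud j / upa_val k)
     else 0).
End UPA.

From mathcomp Require Import all_boot all_order all_algebra.
From mathcomp Require Import ring.
Set Implicit Arguments. Unset Strict Implicit. Unset Printing Implicit Defensive.
Import Order.TTheory GRing.Theory Num.Theory.
Local Open Scope ring_scope.

(* Writing [ahead j] for the total budget of the agents ranked
   strictly before j and [through j = ahead j + B j], call j admitted when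
   [through j <= w j].  We first show that the admitted agents are exactly
   the first K of the ranking (K the paper's k), and that the clearing price
   [price = max (S_K, v_{K+1})] is the least upper bound of the quantities
   [through j] (j admitted) and [w l] (l not admitted).  The allocation rule
   then has three closed forms: [B i / price] for admitted agents,
   [1 - ahead i / w i] (or 0 when that is negative, Case I) for the first
   rejected agent, and 0 beyond it.

   When only agent i raises its value from v to v', the ranks of the others
   relative to each other are unchanged, i can only move forward, and
   [through] can change only by [B i], for agents that i overtakes.  From
   this, i stays admitted and the price does not increase (case A), while a
   marginal agent either becomes admitted at a price at most [through i]
   or stays marginal with a smaller [ahead i] (case B). *)

Section Ranking.
Variables (R : realFieldType) (n : nat) (w : 'I_n -> R).

Local Notation before := (upa_before w).
Local Notation order := (upa_order w).
Local Notation rank l := (index l (upa_order w)).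

Lemma before_total : total before.
Proof.
move=> a b; rewrite /upa_before.
by case: (ltrgtP (w a) (w b)) => //= _; exact: leq_total.
Qed.

Lemma before_trans : transitive before.
Proof.
move=> b a c; rewrite /upa_before.
case/orP=> [h1|/andP[/eqP e1 h1]]; case/orP=> [h2|/andP[/eqP e2 h2]].
- by rewrite (lt_trans h2 h1).
- by rewrite -e2 h1.
- by rewrite e1 h2.
- by rewrite e1 e2 eqxx (leq_trans h1 h2) orbT.
Qed.

Lemma before_refl : reflexive before.
Proof. by move=> a; rewrite /upa_before eqxx leqnn orbT. Qed.

Lemma before_anti a b : before a b -> before b a -> a = b.
Proof.
rewrite /upa_before.
case/orP=> [h1|/andP[/eqP e1 h1]]; case/orP=> [h2|/andP[/eqP e2 h2]].
- by move: (lt_trans h1 h2); rewrite ltxx.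
- by move: h1; rewrite e2 ltxx.
- by move: h2; rewrite e1 ltxx.
- by apply: val_inj; apply/eqP; rewrite eqn_leq h1 h2.
Qed.

Lemma before_value a b : before a b -> w b <= w a.
Proof. by rewrite /upa_before => /orP[/ltW|/andP[/eqP -> _]]. Qed.

Lemma mem_order l : l \in order.
Proof. by rewrite mem_sort mem_enum. Qed.

Lemma size_order : size order = n.
Proof. by rewrite size_sort size_enum_ord. Qed.

Lemma uniq_order : uniq order.
Proof. by rewrite sort_uniq enum_uniq. Qed.

Lemma sorted_order : sorted before order.
Proof. exact: (sort_sorted before_total). Qed.

Lemma rank_lt_n l : (rank l < n)%N.
Proof. by rewrite -[X in (_ < X)%N]size_order index_mem mem_order. Qed.

Lemma nth_rank x0 l : nth x0 order (rank l) = l.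
Proof. by rewrite nth_index // mem_order. Qed.

Lemma rank_inj : injective (fun l => rank l).
Proof. by move=> a b e; rewrite -(nth_rank a a) /= e nth_rank. Qed.

Lemma rank_nth k (x0 : 'I_n) : (k < n)%N -> rank (nth x0 order k) = k.
Proof. by move=> hk; rewrite index_uniq ?size_order ?uniq_order. Qed.

Lemma rank_ltE l j : (rank l < rank j)%N = (l != j) && before l j.
Proof.
have sorted_lt := sorted_ltn_index before_trans sorted_order.
apply/idP/idP => [h|/andP[ne h]].
  rewrite (sorted_lt l j (mem_order l) (mem_order j) h) andbT.
  by apply: contraTneq h => ->; rewrite ltnn.
case: (ltngtP (rank l) (rank j)) => // [h'|/rank_inj e]; last by rewrite e eqxx in ne.
have := sorted_lt j l (mem_order j) (mem_order l) h'.
by move/(before_anti h) => e; rewrite e eqxx in ne.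
Qed.

Lemma rank_lt_total l j : l != j -> (rank l < rank j)%N \/ (rank j < rank l)%N.
Proof.
move=> ne; rewrite !rank_ltE ne eq_sym ne /=.
by case/orP: (before_total l j); auto.
Qed.

Lemma rank_lt_value l j : (rank l < rank j)%N -> w j <= w l.
Proof. by rewrite rank_ltE => /andP[_ /before_value]. Qed.

Lemma val_rank l : upa_val w (rank l) = w l.
Proof. by rewrite /upa_val (nth_map l) ?nth_rank // size_order rank_lt_n. Qed.

Lemma val_n : upa_val w n = 0.
Proof. by rewrite /upa_val nth_default // size_map size_order. Qed.

End Ranking.

Section Allocation.
Variables (R : realFieldType) (n : nat) (B w : 'I_n -> R).
Hypothesis hB : forall j, 0 < B j.
Hypothesis hw : forall j, 0 < w j.

Local Notation rank l := (index l (upa_order w)).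
Local Notation S := (upa_S B w).
Local Notation K := (upa_k B w).

Definition ahead j := \sum_(l | (rank l < rank j)%N) B l.
Definition through j := ahead j + B j.

(* Agent j can be served at its own value together with all agents before it. *)
Definition admitted j := through j <= w j.

Lemma ahead_ge0 j : 0 <= ahead j.
Proof. by apply: sumr_ge0 => l _; apply: ltW. Qed.

Lemma through_gt0 j : 0 < through j.
Proof. by rewrite ltr_wpDl ?ahead_ge0. Qed.

Lemma bud_rank l : upa_bud B w (rank l) = B l.
Proof. by rewrite /upa_bud (nth_map l) ?nth_rank // size_order rank_lt_n. Qed.

Lemma bud_ge0 k : 0 <= upa_bud B w k.
Proof.
rewrite /upa_bud; case: (ltnP k (size (map B (upa_order w)))) => h.
  by have /mapP[j _ ->] := mem_nth 0 h; apply: ltW.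
by rewrite nth_default.
Qed.

Lemma val_ge0 k : 0 <= upa_val w k.
Proof.
rewrite /upa_val; case: (ltnP k (size (map w (upa_order w)))) => h.
  by have /mapP[j _ ->] := mem_nth 0 h; apply: ltW.
by rewrite nth_default.
Qed.

Lemma val_anti q r : (q <= r)%N -> (r <= n)%N -> upa_val w r <= upa_val w q.
Proof.
move=> hqr; rewrite leq_eqVlt => /orP[/eqP ->|hr]; first by rewrite val_n val_ge0.
have hq : (q < n)%N by apply: leq_ltn_trans hr.
rewrite /upa_val !(nth_map (Ordinal hq)) ?size_order //.
apply: before_value.
apply: (sorted_leq_nth (@before_trans _ _ w) (@before_refl _ _ w) _ (@sorted_order _ _ w)) => //.
all: by rewrite inE size_order.
Qed.

Lemma S_succ k : S k.+1 = S k + upa_bud B w k.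
Proof. by rewrite /upa_S big_ord_recr. Qed.

Lemma S_mono k m : (k <= m)%N -> S k <= S m.
Proof.
elim: m => [|m IH]; first by rewrite leqn0 => /eqP ->.
rewrite leq_eqVlt => /orP[/eqP -> //|]; rewrite ltnS => /IH h.
by rewrite S_succ (le_trans h) // lerDl bud_ge0.
Qed.

Lemma S_ranks k : (k <= n)%N -> S k = \sum_(l | (rank l < k)%N) B l.
Proof.
elim: k => [|k IH] hk.
  by rewrite /upa_S big_ord0; apply/esym/big1 => l; rewrite ltn0.
set l0 := nth (Ordinal hk) (upa_order w) k.
have rank_l0 : rank l0 = k by rewrite rank_nth.
have l0_lt : (rank l0 < k.+1)%N by rewrite rank_l0.
rewrite S_succ (IH (ltnW hk)) (bigD1 l0 l0_lt) /= addrC -rank_l0 bud_rank.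
congr (_ + _); apply: eq_bigl => l; rewrite [in RHS]ltnS [in RHS]leq_eqVlt.
case: (eqVneq l l0) => [->|ne]; first by rewrite rank_l0 ltnn eqxx andbF.
suff /negbTE -> : rank l != rank l0 by rewrite andbT.
by apply: contra ne => /eqP /rank_inj ->.
Qed.

Lemma ahead_S j : ahead j = S (rank j).
Proof. by rewrite S_ranks // ltnW // rank_lt_n. Qed.

Lemma through_S j : through j = S (rank j).+1.
Proof. by rewrite /through S_succ bud_rank ahead_S. Qed.

Lemma through_le_ahead j k : (rank j < rank k)%N -> through j <= ahead k.
Proof. by move=> h; rewrite through_S ahead_S S_mono. Qed.

Lemma through_add_le j k : (rank j < rank k)%N -> through j + B k <= through k.
Proof. by move=> h; rewrite lerD2r through_le_ahead. Qed.

Lemma K_le_n : (K <= n)%N.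
Proof. by apply/bigmax_leqP => k _; rewrite -ltnS. Qed.

Lemma K_adm : upa_adm B w K.
Proof.
apply: (big_ind (upa_adm B w)) => // x y hx hy.
by rewrite /maxn; case: ifP.
Qed.

Lemma adm_le_K k : (k <= n)%N -> upa_adm B w k -> (k <= K)%N.
Proof.
rewrite -ltnS => hk.
exact: (@leq_bigmax_cond _ (fun k : 'I_n.+1 => upa_adm B w k)
  (fun k : 'I_n.+1 => (k : nat)) (Ordinal hk)).
Qed.

Lemma adm_down k m : (0 < k)%N -> (k <= m)%N -> (m <= n)%N ->
  upa_adm B w m -> upa_adm B w k.
Proof.
move=> hk hkm hm; rewrite /upa_adm !eqn0Ngt hk (leq_trans hk hkm) /= => h.
have val_km : upa_val w m.-1 <= upa_val w k.-1.
  by apply: val_anti; [rewrite -!subn1 leq_sub2r | apply: leq_trans (leq_pred m) hm].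
exact: le_trans (S_mono hkm) (le_trans h val_km).
Qed.

Lemma admittedE j : admitted j = (rank j < K)%N.
Proof.
have -> : admitted j = upa_adm B w (rank j).+1 by rewrite /upa_adm /= -through_S val_rank.
apply/idP/idP => h; first exact/adm_le_K/h/rank_lt_n.
exact: (adm_down _ h K_le_n K_adm).
Qed.

Lemma admitted_down j k : (rank j < rank k)%N -> admitted k -> admitted j.
Proof. by rewrite !admittedE => /ltn_trans; apply. Qed.

(* The market-clearing price: max (S_K, v_{K+1}) in the paper's notation. *)
Definition price := Num.max (S K) (upa_val w K).

Lemma price_ge_admitted j : admitted j -> through j <= price.
Proof.
rewrite admittedE through_S => h.
by apply: le_trans (S_mono h) _; rewrite le_max lexx.
Qed.

Lemma price_ge_rejected l : ~~ admitted l -> w l <= price.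
Proof.
rewrite admittedE -leqNgt -[w l]val_rank => h.
by apply: le_trans (val_anti h (ltnW (rank_lt_n w l))) _; rewrite le_max lexx orbT.
Qed.

Lemma price_least (i0 : 'I_n) X : (forall j, admitted j -> through j <= X) ->
  (forall l, ~~ admitted l -> w l <= X) -> price <= X.
Proof.
move=> h_adm h_rej.
have X_ge0 : 0 <= X.
  case: (boolP (admitted i0)) => a.
    exact: le_trans (ltW (through_gt0 i0)) (h_adm _ a).
  exact: le_trans (ltW (hw i0)) (h_rej _ a).
rewrite ge_max; apply/andP; split.
  case: (posnP K) => [->|K_gt0]; first by rewrite /upa_S big_ord0.
  have hK : (K.-1 < n)%N by rewrite prednK // K_le_n.
  set j := nth (Ordinal hK) (upa_order w) K.-1.
  have rank_j : rank j = K.-1 by rewrite rank_nth.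
  have adm_j : admitted j by rewrite admittedE rank_j prednK.
  by have := h_adm j adm_j; rewrite through_S rank_j prednK.
case: (ltnP K n) => hK; last first.
  have -> : K = n by apply/eqP; rewrite eqn_leq K_le_n.
  by rewrite val_n.
set l := nth (Ordinal hK) (upa_order w) K.
have rank_l : rank l = K by rewrite rank_nth.
have rej_l : ~~ admitted l by rewrite admittedE rank_l ltnn.
by have := h_rej l rej_l; rewrite -[w l]val_rank rank_l.
Qed.

Lemma price_gt0 (i0 : 'I_n) : 0 < price.
Proof.
case: (boolP (admitted i0)) => a.
  exact: lt_le_trans (through_gt0 i0) (price_ge_admitted a).
exact: lt_le_trans (hw i0) (price_ge_rejected a).
Qed.

Lemma alloc_admitted i : admitted i -> upa_alloc B w i = B i / price.
Proof. by rewrite admittedE /upa_alloc /price => ->; case: ltP. Qed.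

Lemma alloc_marginal i : ~~ admitted i -> (forall j, (rank j < rank i)%N -> admitted j) ->
  upa_alloc B w i = if w i < ahead i then 0 else 1 - ahead i / w i.
Proof.
move=> ai h.
have rank_i : rank i = K.
  apply/eqP; rewrite eqn_leq [(K <= _)%N]leqNgt -admittedE ai andbT leqNgt; apply/negP => lt.
  have hK : (K < n)%N by apply: ltn_trans lt (rank_lt_n w i).
  have := h (nth (Ordinal hK) (upa_order w) K).
  by rewrite admittedE rank_nth // ltnn => /(_ lt).
rewrite /upa_alloc rank_i ltnn eqxx ahead_S -(val_rank w i) rank_i.
by case: ltP => //; rewrite /upa_S -mulr_suml.
Qed.

Lemma alloc_beyond i j : ~~ admitted i -> (rank j < rank i)%N -> ~~ admitted j ->
  upa_alloc B w i = 0.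
Proof.
rewrite !admittedE -!leqNgt => _ hji hj.
have h : (K < rank i)%N by apply: leq_ltn_trans hj hji.
by rewrite /upa_alloc ltnNge (ltnW h) /= gtn_eqF //; case: ifP.
Qed.

Lemma allocation_cases i :
  [\/ admitted i,
      ~~ admitted i /\ (forall j, (rank j < rank i)%N -> admitted j) |
      exists j, [/\ ~~ admitted i, (rank j < rank i)%N & ~~ admitted j]].
Proof.
case: (boolP (admitted i)) => ai; first by constructor 1.
case: (boolP [forall j, (rank j < rank i)%N ==> admitted j]) => h.
  by constructor 2; split => // j; move/forallP: h => /(_ j) /implyP.
constructor 3; move: h; rewrite negb_forall => /existsP[j].
by rewrite negb_imply => /andP[h1 h2]; exists j.
Qed.

(* Allocations are nonnegative; in Case II this uses S_K <= v_{K+1}. *)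
Lemma alloc_ge0 i : 0 <= upa_alloc B w i.
Proof.
case: (allocation_cases i) => [ai|[ai h]|[j [ai hj aj]]].
- by rewrite alloc_admitted // divr_ge0 // ltW // (price_gt0 i).
- rewrite alloc_marginal //; case: ltP => // hs.
  by rewrite subr_ge0 ler_pdivrMr ?hw // mul1r.
- by rewrite (alloc_beyond ai hj aj).
Qed.

End Allocation.

Lemma residual_le_share (R : realFieldType) (a b v : R) :
  0 <= a -> 0 < b -> 0 < v -> v < a + b -> 1 - a / v <= b / (a + b).
Proof.
move=> ha hb hv hab.
have hab0 : 0 < a + b by apply: lt_trans hab.
rewrite -subr_ge0.
have -> : b / (a + b) - (1 - a / v) = a * (a + b - v) / (v * (a + b)).
  by field; rewrite !gt_eqF.
by rewrite divr_ge0 ?mulr_ge0 ?subr_ge0 ?(ltW hab) ?(ltW hv) ?(ltW hab0).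
Qed.

Section Monotonicity.
Variables (R : realFieldType) (n : nat) (B : 'I_n -> R).
Hypothesis hB : forall j, 0 < B j.
Variables (i : 'I_n) (v v' : 'I_n -> R).
Hypotheses (hv : forall j, 0 < v j) (hv' : forall j, 0 < v' j).
Hypothesis hother : forall j, j != i -> v j = v' j.
Hypothesis hle : v i <= v' i.

Local Notation rank l := (index l (upa_order v)).
Local Notation rank' l := (index l (upa_order v')).

Lemma sum_B_mono (p q : pred 'I_n) : (forall l, p l -> q l) ->
  \sum_(l | p l) B l <= \sum_(l | q l) B l.
Proof.
move=> h; rewrite [X in _ <= X](bigID p) /=.
rewrite (eq_bigl p) => [|l]; last by case: (boolP (p l)) => pl; rewrite ?(h _ pl) ?andbF.
by rewrite lerDl sumr_ge0 // => l _; apply: ltW.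
Qed.

Lemma rank_others l j : l != i -> j != i -> (rank' l < rank' j)%N = (rank l < rank j)%N.
Proof. by move=> li ji; rewrite !rank_ltE /upa_before -!hother. Qed.

Lemma rank_i_forward j : j != i -> (rank i < rank j)%N -> (rank' i < rank' j)%N.
Proof.
move=> ji; rewrite !rank_ltE => /andP[ne b]; rewrite ne /=; move: b.
rewrite /upa_before -(hother ji) => /orP[h|/andP[/eqP e h]].
  by rewrite (lt_le_trans h hle).
case: (eqVneq (v' i) (v j)) => [_|ne']; first by rewrite h orbT.
by rewrite lt_neqAle eq_sym ne' -e hle.
Qed.

Lemma rank_ahead_of_i j : j != i -> (rank' j < rank' i)%N -> (rank j < rank i)%N.
Proof.
move=> ji h; case: (rank_lt_total v ji) => // /(rank_i_forward ji) h'.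
by move: (ltn_trans h h'); rewrite ltnn.
Qed.

Lemma ahead_i_le : ahead B v' i <= ahead B v i.
Proof.
apply: sum_B_mono => l h; case: (eqVneq l i) => [e|li].
  by move: h; rewrite e ltnn.
exact: rank_ahead_of_i.
Qed.

Lemma through_i_le : through B v' i <= through B v i.
Proof. by rewrite /through lerD2r ahead_i_le. Qed.

Lemma ahead_same l : l != i -> (rank i < rank l)%N = (rank' i < rank' l)%N ->
  ahead B v' l = ahead B v l.
Proof.
move=> li h; apply: eq_bigl => m.
by case: (eqVneq m i) => [->|mi]; [rewrite h | rewrite rank_others].
Qed.

Lemma through_others l : l != i ->
  through B v' l = through B v l \/
  [/\ (rank l < rank i)%N, (rank' i < rank' l)%N & through B v' l = through B v l + B i].
Proof.
move=> li; rewrite /through.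
case: (rank_lt_total v li) => h; last by left; rewrite ahead_same // h (rank_i_forward li h).
case: (rank_lt_total v' li) => h'.
  left; rewrite ahead_same //; apply/idP/idP => H.
    by move: (ltn_trans h H); rewrite ltnn.
  by move: (ltn_trans h' H); rewrite ltnn.
right; split => //; rewrite addrAC; congr (_ + _).
rewrite /ahead (bigD1 i) //= addrC; congr (_ + _).
apply: eq_bigl => m; case: (eqVneq m i) => [->|mi]; first by rewrite andbF ltnNge ltnW.
by rewrite andbT rank_others.
Qed.

Lemma through_ahead_of_i l : l != i -> (rank' l < rank' i)%N ->
  through B v' l = through B v l.
Proof.
move=> li h; case: (through_others li) => // [[_ h' _]].
by move: (ltn_trans h h'); rewrite ltnn.
Qed.

Lemma admitted_stays : admitted B v i -> admitted B v' i.
Proof. by move=> ai; apply: le_trans through_i_le (le_trans ai hle). Qed.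

Lemma price_decreases : admitted B v i -> price B v' <= price B v.
Proof.
move=> ai; have ai' := admitted_stays ai.
apply: (price_least hB hv' i) => [j aj'|l nl'].
  case: (eqVneq j i) => [->|ji].
    exact: le_trans through_i_le (price_ge_admitted hB hv ai).
  case: (through_others ji) => [e|[h1 _ ->]].
    by rewrite e; apply: (price_ge_admitted hB hv); rewrite /admitted -e (hother ji).
  exact: le_trans (through_add_le hB h1) (price_ge_admitted hB hv ai).
have li : l != i by apply: contraNneq nl' => ->.
rewrite -(hother li); case: (boolP (admitted B v l)) => al; last first.
  exact: price_ge_rejected hB hv l al.
exfalso; move/negP: nl'; apply; rewrite /admitted -(hother li).
case: (through_others li) => [-> //|[h1 _ ->]].
exact: le_trans (through_add_le hB h1) (le_trans ai (rank_lt_value h1)).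
Qed.

Lemma monotone_admitted : admitted B v i -> upa_alloc B v i <= upa_alloc B v' i.
Proof.
move=> ai; rewrite (alloc_admitted hB hv ai) (alloc_admitted hB hv' (admitted_stays ai)).
apply: ler_wpM2l; first exact: ltW.
by rewrite lef_pV2 ?posrE ?(price_gt0 hB hv i) ?(price_gt0 hB hv' i) ?price_decreases.
Qed.

(* Case B, when i becomes admitted: the new price is at most the old
   [through i], which exceeds v i since i was rejected. *)
Lemma price_marginal_admitted : ~~ admitted B v i ->
  (forall j, (rank j < rank i)%N -> admitted B v j) -> admitted B v' i ->
  price B v' <= through B v i.
Proof.
move=> ai h ai'; have vT : v i < through B v i by rewrite ltNge.
apply: (price_least hB hv' i) => [j aj'|l nl'].
  case: (eqVneq j i) => [->|ji]; first exact: through_i_le.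
  case: (through_others ji) => [e|[h1 _ ->]]; last exact: (through_add_le hB h1).
  rewrite e; case: (rank_lt_total v ji) => hji.
    by apply: le_trans (through_le_ahead hB hji) _; rewrite lerDl ltW.
  exfalso; move/negP: ai; apply; apply: (admitted_down hB hv hji).
  by rewrite /admitted -e (hother ji).
have li : l != i by apply: contraNneq nl' => ->.
rewrite -(hother li); case: (rank_lt_total v li) => hli; last first.
  exact: le_trans (rank_lt_value hli) (ltW vT).
case: (through_others li) => [e|[h1 _ e]].
  by exfalso; move/negP: nl'; apply; rewrite /admitted e -(hother li); apply: h.
move: nl'; rewrite /admitted -ltNge e -(hother li) => /ltW/le_trans; apply.
exact: (through_add_le hB h1).
Qed.

(* Case B concluded: if i becomes admitted we compare with its proportional
   share at the old [through i]; otherwise its residual share grows. *)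
Lemma monotone_marginal : ~~ admitted B v i ->
  (forall j, (rank j < rank i)%N -> admitted B v j) ->
  upa_alloc B v i <= upa_alloc B v' i.
Proof.
move=> ai h; rewrite (alloc_marginal hB hv ai h).
case: ltP => hs; first exact: alloc_ge0.
have vT : v i < through B v i by rewrite ltNge.
have ahead_admitted' j : (rank' j < rank' i)%N -> admitted B v' j.
  move=> hj; have ji : j != i by apply: contraTneq hj => ->; rewrite ltnn.
  rewrite /admitted (through_ahead_of_i ji hj) -(hother ji).
  exact/h/rank_ahead_of_i.
case: (boolP (admitted B v' i)) => ai'.
  rewrite (alloc_admitted hB hv' ai').
  have ahead_i_ge0 : 0 <= ahead B v i by apply: ahead_ge0.
  apply: le_trans (residual_le_share ahead_i_ge0 (hB i) (hv i) vT) _.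
  have P'_le := price_marginal_admitted ai h ai'.
  have P'_gt0 := price_gt0 hB hv' i.
  apply: ler_wpM2l; first exact: ltW.
  by rewrite lef_pV2 ?posrE // (lt_le_trans P'_gt0 P'_le).
rewrite (alloc_marginal hB hv' ai' ahead_admitted').
case: ltP => hs'.
  by move: (lt_le_trans hs' (le_trans ahead_i_le (le_trans hs hle))); rewrite ltxx.
rewrite lerD2l lerN2; apply: ler_pM.
- exact: ahead_ge0.
- by rewrite invr_ge0 ltW.
- exact: ahead_i_le.
- by rewrite lef_pV2 ?posrE.
Qed.

End Monotonicity.

Theorem mainTheorem6 (R : realFieldType) (n : nat) (B : 'I_n -> R)
  (hB : forall j, 0 < B j) (i : 'I_n) (v v' : 'I_n -> R)
  (hv : forall j, 0 < v j) (hv' : forall j, 0 < v' j)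
  (hother : forall j, j != i -> v j = v' j) (hle : v i <= v' i) :
  upa_alloc B v i <= upa_alloc B v' i.
Proof.
case: (allocation_cases B v i) => [ai|[ai h]|[j [ai hj aj]]].
- exact: monotone_admitted.
- exact: monotone_marginal.
- by rewrite (alloc_beyond hB hv ai hj aj) (alloc_ge0 hB hv').
Qed.
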